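(* Let $X_m$ be a del Pezzo surface ($m\le 6$) and let $\mathbf v$ be a Chern character satisfying the DL condition. Let $\mathcal V$ be a coherent sheaf with $\operatorname{ch}_0(\mathcal V)=\operatorname{ch}_0(\mathbf v)$ and $\nu(\mathcal V)=\nu(\mathbf v)$. If $\mathcal E$ is an exceptional bundle with $r(\mathcal E)<r(\mathbf v)$ and $\mu(\mathbf v)\le\mu(\mathcal E)\le\mu(\mathbf v)+K_{X_m}^2$ such that $\chi(\mathcal E,\mathcal V)\ge0$, or an exceptional bundle with $r(\mathcal E)<r(\mathbf v)$ and $\mu(\mathbf v)-K_{X_m}^2\le\mu(\mathcal E)\le\mu(\mathbf v)$ such that $\chi(\mathcal V,\mathcal E)\ge 0$, then $\Delta(\mathcal V)\le\Delta(\mathbf v)$.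
   Context: $X_m$ is the blowup of $\mathbb P^2$ at $m$ general points. $\nu=\operatorname{ch}_1/\operatorname{ch}_0$, $\Delta=\nu^2/2-\operatorname{ch}_2/\operatorname{ch}_0$, $\mu=\nu.(-K_{X_m})$. $\chi(\mathcal A,\mathcal B)=\sum(-1)^i\dim\operatorname{Ext}^i(\mathcal A,\mathcal B)$, extended to Chern characters by Riemann–Roch. An object $\mathcal E$ is exceptional if $\operatorname{Ext}^0(\mathcal E,\mathcal E)=\mathbb C$ and $\operatorname{Ext}^i(\mathcal E,\mathcal E)=0$ for $i\neq0$. A Chern character (or torsion-free sheaf) $\mathbf v$ satisfies the DL condition if (DL1) $\chi(\mathcal E,\mathbf v)\le 0$ for every exceptional bundle $\mathcal E$ with $r(\mathcal E)<r(\mathbf v)$ and $\mu(\mathbf v)\le\mu(\mathcal E)\le\mu(\mathbf v)+K_{X_m}^2$, and (DL2) $\chi(\mathbf v,\mathcal E)\le0$ for every exceptional bundle $\mathcal E$ with $r(\mathcal E)<r(\mathbf v)$ and $\mu(\mathbf v)-K_{X_m}^2\le\mu(\mathcal E)\le\mu(\mathbf v)$. *)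

From HB Require Import structures.
From mathcomp Require Import all_boot all_order all_algebra.
Unset Printing Implicit Defensive.
Import Order.TTheory GRing.Theory Num.Theory.
Local Open Scope ring_scope.

(* Pic(X_m) (x) Q, coordinates w.r.t. the basis H, E_1, ..., E_m;
   index 0 is H, index i+1 is E_{i+1}. *)
Definition picQ (m : nat) := 'I_m.+1 -> rat.

Definition dot {m : nat} (x y : picQ m) : rat :=
  \sum_(i < m.+1) (if i == ord0 then 1 else -1) * x i * y i.

Definition antiK (m : nat) : picQ m := fun i => if i == ord0 then 3 else -1.

Definition K2 (m : nat) : rat := dot (antiK m) (antiK m).

Record chern (m : nat) := Chern { ch0 : rat; ch1 : picQ m; ch2 : rat }.
Arguments ch0 {m} _.
Arguments ch1 {m} _ _.
Arguments ch2 {m} _.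

Definition nu {m : nat} (v : chern m) : picQ m := fun i => ch1 v i / ch0 v.
Definition Delta {m : nat} (v : chern m) : rat :=
  dot (nu v) (nu v) / 2 - ch2 v / ch0 v.
Definition mu {m : nat} (v : chern m) : rat := dot (nu v) (antiK m).

(* Euler characteristic chi(A,B) = int ch(A)^dual ch(B) td(X_m)  (Riemann-Roch),
   td(X_m) = 1 - K/2 + [pt] *)
Definition chi {m : nat} (a b : chern m) : rat :=
  ch0 a * ch0 b
  + dot (fun i => ch0 a * ch1 b i - ch0 b * ch1 a i) (antiK m) / 2
  + ch0 a * ch2 b + ch0 b * ch2 a - dot (ch1 a) (ch1 b).

Definition DL {m : nat} (Exc : chern m -> Prop) (v : chern m) : Prop :=
  (forall E, Exc E -> ch0 E < ch0 v ->
     mu v <= mu E <= mu v + K2 m -> chi E v <= 0) /\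
  (forall E, Exc E -> ch0 E < ch0 v ->
     mu v - K2 m <= mu E <= mu v -> chi v E <= 0).

From HB Require Import structures.
From mathcomp Require Import all_boot all_order all_algebra.
From Stdlib Require Import FunctionalExtensionality.
From mathcomp Require Import ring lra.
Import Order.TTheory GRing.Theory Num.Theory.
Set Implicit Arguments.
Unset Strict Implicit.
Local Open Scope ring_scope.

(* Idea: V and v share ch_0 and ch_1, so by Riemann-Roch chi(E, V) - chi(E, v)
   and chi(V, E) - chi(v, E) both equal r(E) (ch_2 V - ch_2 v).  The DL
   condition makes the relevant chi(-, v) nonpositive while chi(-, V) is
   nonnegative by hypothesis, hence ch_2 v <= ch_2 V, which with equal rank
   and slope is exactly Delta V <= Delta v. *)

Section SameSlope.

Variables (m : nat) (v V : chern m).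
Hypotheses (ch0_v_gt0 : 0 < ch0 v) (ch0_eq : ch0 V = ch0 v) (nu_eq : nu V = nu v).

Lemma ch1_eq_of_nu : ch1 V = ch1 v.
Proof.
apply: functional_extensionality => i.
have := congr1 (fun f => f i * ch0 v) nu_eq.
by rewrite /nu ch0_eq !divfK ?gt_eqF.
Qed.

Lemma chiL_sub_ch2 (E : chern m) :
  chi E V - chi E v = ch0 E * (ch2 V - ch2 v).
Proof. by rewrite /chi ch0_eq ch1_eq_of_nu; ring. Qed.

Lemma chiR_sub_ch2 (E : chern m) :
  chi V E - chi v E = ch0 E * (ch2 V - ch2 v).
Proof. by rewrite /chi ch0_eq ch1_eq_of_nu; ring. Qed.

Lemma ch2_le_of_chi_sub (E : chern m) (x y : rat) :
  0 < ch0 E -> x <= 0 <= y -> y - x = ch0 E * (ch2 V - ch2 v) ->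
  ch2 v <= ch2 V.
Proof.
move=> ch0_E_gt0 /andP[x_le0 y_ge0] def_yx.
rewrite -subr_ge0 -(pmulr_rge0 _ ch0_E_gt0) -def_yx.
lra.
Qed.

Lemma Delta_le_of_ch2 : ch2 v <= ch2 V -> Delta V <= Delta v.
Proof.
move=> ch2_le.
by rewrite /Delta nu_eq ch0_eq lerD2l lerN2 ler_pM2r // invr_gt0.
Qed.

End SameSlope.

Theorem lemma7p10 (m : nat) (Exc : chern m -> Prop)
  (Exc_rank : forall E, Exc E -> 0 < ch0 E)
  (v V E : chern m) :
  (m <= 6)%N ->
  0 < ch0 v ->
  DL Exc v ->
  ch0 V = ch0 v ->
  nu V = nu v ->
  Exc E ->
  ch0 E < ch0 v ->
  ((mu v <= mu E <= mu v + K2 m /\ 0 <= chi E V) \/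
   (mu v - K2 m <= mu E <= mu v /\ 0 <= chi V E)) ->
  Delta V <= Delta v.
Proof.
move=> _ ch0_v_gt0 [DL1 DL2] ch0_eq nu_eq excE rank_lt range.
apply: Delta_le_of_ch2 => //.
have ch0_E_gt0 := Exc_rank E excE.
case: range => [[mu_range chi_ge0] | [mu_range chi_ge0]].
- apply: (ch2_le_of_chi_sub ch0_E_gt0 _ (chiL_sub_ch2 ch0_v_gt0 ch0_eq nu_eq E)).
  by rewrite chi_ge0 DL1.
- apply: (ch2_le_of_chi_sub ch0_E_gt0 _ (chiR_sub_ch2 ch0_v_gt0 ch0_eq nu_eq E)).
  by rewrite chi_ge0 DL2.
Qed.
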